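(* Let $(G,\Omega)$ be an $\ell$-permutation group that is o-2 transitive, and let $g,h\in G$ with $h\neq1$ and $\mathrm{supp}(h)\cap\mathrm{supp}(h^g)=\emptyset$. Then there are $f,k\in G$ such that $$[h^{-1},h^f]\,[h^{-g},h^{gk}]\neq[h^{-g},h^{gk}]\,[h^{-1},h^f].$$
   Context: An $\ell$-permutation group $(G,\Omega)$ is a totally ordered set $\Omega$ with a subgroup $G$ of $\mathrm{Aut}(\Omega,\leqslant)$ (acting on the right) closed under pointwise max and min. It is o-2 transitive if $G$ acts transitively on pairs $(\alpha,\beta)$ with $\alpha<\beta$. $\mathrm{supp}(g)=\{\alpha:\alpha g\ne\alpha\}$, $g^f=f^{-1}gf$, $h^{-g}=(h^g)^{-1}$, $[a,b]=a^{-1}b^{-1}ab$. *)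

From HB Require Import structures.
From mathcomp Require Import all_boot all_order.
From Stdlib Require Import ClassicalEpsilon.
Set Implicit Arguments. Unset Strict Implicit. Unset Printing Implicit Defensive.
Import Order.TTheory.
Local Open Scope order_scope.

Section LPerm.
Context {disp : Order.disp_t} {T : orderType disp}.

Definition order_aut (f : T -> T) : Prop :=
  bijective f /\ {mono f : x y / x <= y}.

(* the inverse function (chosen by choice; it is the genuine inverse
   whenever f is bijective) *)
Definition oinv (f : T -> T) : T -> T :=
  fun y => epsilon (inhabits y) (fun x => f x = y).

(* Right action: alpha (a b) = (alpha a) b, i.e. a b acts as b \o a. *)
Definition pmul (a b : T -> T) : T -> T := fun x => b (a x).

Definition pconj (h f : T -> T) : T -> T := pmul (pmul (oinv f) h) f.

Definition pcomm (a b : T -> T) : T -> T :=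
  pmul (pmul (pmul (oinv a) (oinv b)) a) b.

Definition psupp (h : T -> T) : T -> Prop := fun x => h x <> x.

Definition l_perm_group (G : (T -> T) -> Prop) : Prop :=
  [/\ (forall f, G f -> order_aut f),
      G id,
      (forall f g, G f -> G g -> G (pmul f g)),
      (forall f, G f -> G (oinv f))
    & (forall f g, G f -> G g ->
         G (fun x => Order.max (f x) (g x)) /\ G (fun x => Order.min (f x) (g x)))].

Definition o2_transitive (G : (T -> T) -> Prop) : Prop :=
  forall a b c e : T, a < b -> c < e ->
    exists g, G g /\ g a = c /\ g b = e.

End LPerm.

From mathcomp Require Import all_boot all_order.
From Stdlib Require Import ClassicalEpsilon FunctionalExtensionality Classical.
Set Implicit Arguments. Unset Strict Implicit. Unset Printing Implicit Defensive.
Import Order.TTheory.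
Local Open Scope order_scope.

(* Write H1 := h and H2 := h^g; their supports are disjoint, and h^(gk) = H2^k.
   Choose a point c moved upwards by one of them, say c < H1 c, and a point d
   moved upwards by the other with H1 c < d (reversing the order if h moves
   points downwards, and swapping the roles of H1 and H2 if needed).  By o-3
   transitivity there are f, k with f : (c, H1 c, d) |-> (c, d, H2 d) and
   k : (c, H2 d, H2^2 d) |-> (d, H2 d, H2^2 d).  Evaluating both products of
   commutators at H2 d gives d on one side and (H1^f)(H1^-1 c) <> d on the
   other. *)

Section Bijections.
Context {disp : Order.disp_t} {T : orderType disp}.
Implicit Types (f g h k : T -> T) (x y : T).

Lemma oinvKV f : bijective f -> cancel (oinv f) f.
Proof.
case=> f' fK f'K y.
by apply: (epsilon_spec (inhabits y) (fun x => f x = y)); exists (f' y).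
Qed.

Lemma oinvK f : bijective f -> cancel f (oinv f).
Proof. by move=> bij_f x; apply: (bij_inj bij_f); rewrite oinvKV. Qed.

Lemma oinv_bij f : bijective f -> bijective (oinv f).
Proof. by move=> bij_f; exists f; [apply: oinvKV | apply: oinvK]. Qed.

Lemma oinv_oinv f : bijective f -> oinv (oinv f) =1 f.
Proof.
move=> bij_f x; apply: (bij_inj (oinv_bij bij_f)).
by rewrite oinvKV ?oinvK //; apply: oinv_bij.
Qed.

Lemma oinv_pmul f g : bijective f -> bijective g ->
  oinv (pmul f g) =1 pmul (oinv g) (oinv f).
Proof.
move=> bij_f bij_g y; have bij_fg : bijective (pmul f g) by apply: bij_comp.
by apply: (bij_inj bij_fg); rewrite oinvKV // /pmul !oinvKV.
Qed.

Lemma pconjE h f x : bijective f -> pconj h f (f x) = f (h x).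
Proof. by move=> bij_f; rewrite /pconj /pmul oinvK. Qed.

Lemma pconj_pmul h g k : bijective g -> bijective k ->
  pconj h (pmul g k) = pconj (pconj h g) k.
Proof.
move=> bij_g bij_k; apply: functional_extensionality => x.
by rewrite /pconj [in LHS]/pmul oinv_pmul.
Qed.

Lemma pcomm_oinvE h u x : bijective h ->
  pcomm (oinv h) u x = u (oinv h (oinv u (h x))).
Proof. by move=> bij_h; rewrite /pcomm /pmul oinv_oinv. Qed.

(* With [A := [H1^-1, u]] and [B := [H2^-1, v]]: [(A B) d1 = d0] while
   [(B A) d1 = u (H1^-1 c0)], which differs from [u c0 = d0]. *)
Lemma pcomm_oinv_noncommute (H1 H2 u v : T -> T) (c0 d0 d1 d2 : T) :
  bijective H1 -> bijective H2 -> bijective u -> bijective v ->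
  H1 c0 <> c0 -> H1 d0 = d0 -> H1 d1 = d1 -> H2 d0 = d1 -> H2 d1 = d2 ->
  u c0 = d0 -> u d1 = d1 -> v d0 = d0 -> v d1 = d2 ->
  pmul (pcomm (oinv H1) u) (pcomm (oinv H2) v) <>
  pmul (pcomm (oinv H2) v) (pcomm (oinv H1) u).
Proof.
move=> bH1 bH2 bu bv H1c0 H1d0 H1d1 H2d0 H2d1 uc0 ud1 vd0 vd1.
move=> /(congr1 (fun F => F d1)); rewrite /pmul !pcomm_oinvE //.
rewrite H1d1 -{1}ud1 oinvK // -{1}H1d1 oinvK // ud1.
rewrite H2d1 -vd1 oinvK // -H2d0 oinvK // vd0.
rewrite H1d0 -uc0 oinvK // => /(bij_inj bu) c0E.
by apply: H1c0; rewrite [in LHS]c0E oinvKV.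
Qed.

End Bijections.

Definition disjoint_supp {disp : Order.disp_t} {T : orderType disp}
  (H1 H2 : T -> T) : Prop := forall x, H1 x = x \/ H2 x = x.

Definition comms_noncommuting {disp : Order.disp_t} {T : orderType disp}
  (G : (T -> T) -> Prop) (H1 H2 : T -> T) : Prop :=
  exists f k, G f /\ G k /\
    pmul (pcomm (oinv H1) (pconj H1 f)) (pcomm (oinv H2) (pconj H2 k)) <>
    pmul (pcomm (oinv H2) (pconj H2 k)) (pcomm (oinv H1) (pconj H1 f)).

Lemma comms_noncommutingC {disp : Order.disp_t} {T : orderType disp}
  (G : (T -> T) -> Prop) (H1 H2 : T -> T) :
  comms_noncommuting G H1 H2 -> comms_noncommuting G H2 H1.
Proof.
by move=> [f [k [Gf [Gk ne]]]]; exists k, f; do 2!split=> //; move/esym.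
Qed.

Section LPermGroup.
Context {disp : Order.disp_t} {T : orderType disp}.
Variable G : (T -> T) -> Prop.
Hypothesis lG : l_perm_group G.
Implicit Types (f g h k : T -> T) (x y : T).

Lemma lperm_bij f : G f -> bijective f.
Proof. by case: lG => aut _ _ _ _ /aut []. Qed.

Lemma lperm_lemono f : G f -> {mono f : x y / x <= y}.
Proof. by case: lG => aut _ _ _ _ /aut []. Qed.

Lemma lperm_ltmono f : G f -> {mono f : x y / x < y}.
Proof. by move/lperm_lemono/leW_mono. Qed.

Lemma lperm_pconj h f : G h -> G f -> G (pconj h f).
Proof. by case: lG => _ _ Gmul Ginv _ Gh Gf; apply/Gmul/Gf/Gmul/Gh/Ginv. Qed.

(* [max (min (max p r) q) (min p r)] where [p], [r], [q] match the pairs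
   [(a, b)], [(b, c)], [(a, c)] respectively. *)
Lemma o3_transitive : o2_transitive G ->
  forall a b c a' b' c' : T, a < b -> b < c -> a' < b' -> b' < c' ->
  exists F, G F /\ F a = a' /\ F b = b' /\ F c = c'.
Proof.
case: lG => _ _ _ _ Glat o2 a b c a' b' c' ab bc ab' bc'.
have [p [Gp [pa pb]]] := o2 a b a' b' ab ab'.
have [r [Gr [rb rc]]] := o2 b c b' c' bc bc'.
have [q [Gq [qa qc]]] := o2 a c a' c' (lt_trans ab bc) (lt_trans ab' bc').
have [Gpr Gpr'] := Glat p r Gp Gr.
have [_ Gprq] := Glat _ _ Gpr Gq.
have [GF _] := Glat _ _ Gprq Gpr'.
eexists; split; first exact: GF.
rewrite /= pa pb rb rc qa qc; split; last split.
- rewrite (@min_r _ _ (Order.max a' (r a))); last by rewrite le_max lexx.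
  by rewrite max_l // ge_min lexx.
- by rewrite maxxx minxx max_r // ge_min lexx.
- rewrite (@min_r _ _ (Order.max (p c) c')); last by rewrite le_max lexx orbT.
  by rewrite max_l // ge_min lexx orbT.
Qed.

Lemma comms_noncommuting_of_lt H1 H2 c d : o2_transitive G ->
  G H1 -> G H2 -> disjoint_supp H1 H2 ->
  c < H1 c -> H1 c < d -> d < H2 d -> comms_noncommuting G H1 H2.
Proof.
move=> o2 GH1 GH2 disj cH1c H1cd dH2d.
have H2dH2 : H2 d < H2 (H2 d) by rewrite lperm_ltmono.
have cH2d : c < H2 d by rewrite (lt_trans cH1c) // (lt_trans H1cd).
have [f [Gf [fc [fH1c fd]]]] :=
  o3_transitive o2 cH1c H1cd (lt_trans cH1c H1cd) dH2d.
have [k [Gk [kc [kH2d kH2H2d]]]] := o3_transitive o2 cH2d H2dH2 dH2d H2dH2.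
have H1_fix x : x < H2 x -> H1 x = x.
  by case: (disj x) => // ->; rewrite ltxx.
have H2c : H2 c = c by case: (disj c) => // H1c; move: cH1c; rewrite H1c ltxx.
have [bH1 bH2] := (lperm_bij GH1, lperm_bij GH2).
have [bf bk] := (lperm_bij Gf, lperm_bij Gk).
have bu := lperm_bij (lperm_pconj GH1 Gf).
have bv := lperm_bij (lperm_pconj GH2 Gk).
exists f, k; split=> //; split=> //.
apply: (@pcomm_oinv_noncommute _ _ _ _ _ _ c d (H2 d) (H2 (H2 d))) => //.
- by move/eqP; rewrite gt_eqF.
- exact: H1_fix.
- exact: H1_fix.
- by rewrite -fc pconjE.
- by rewrite -fd pconjE // H1_fix.
- by rewrite -kc pconjE // H2c.
- by rewrite -{1}kH2d pconjE.
Qed.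

Lemma comms_noncommuting_conj_of_lt g h a : o2_transitive G ->
  G g -> G h -> disjoint_supp h (pconj h g) -> a < h a ->
  comms_noncommuting G h (pconj h g).
Proof.
move=> o2 Gg Gh disj aha; set H2 := pconj h g in disj *.
have GH2 : G H2 by apply: lperm_pconj.
have H2g y : H2 (g y) = g (h y) by rewrite /H2 pconjE //; apply: lperm_bij.
have gaH2ga : g a < H2 (g a) by rewrite H2g lperm_ltmono.
have hga : h (g a) = g a.
  by case: (disj (g a)) => // H2ga; move: gaH2ga; rewrite H2ga ltxx.
have H2a : H2 a = a by case: (disj a) => // ha; move: aha; rewrite ha ltxx.
case: (ltgtP (h a) (g a)) => [hag|gah|hag].
- exact: comms_noncommuting_of_lt o2 Gh GH2 disj aha hag gaH2ga.
- apply: comms_noncommutingC.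
  have disj' : disjoint_supp H2 h by move=> x; case: (disj x); [right|left].
  have gaa : g a < a by rewrite ltNge -(lperm_lemono Gh) hga -ltNge.
  have H2gaa : H2 (g a) < a by rewrite -{2}H2a lperm_ltmono.
  exact: comms_noncommuting_of_lt o2 GH2 Gh disj' gaH2ga H2gaa aha.
- have : h (h a) = h a by rewrite hag hga.
  by move/(bij_inj (lperm_bij Gh)) => ha; move: aha; rewrite ha ltxx.
Qed.

End LPermGroup.

Lemma max_dual {disp : Order.disp_t} {T : orderType disp} (x y : T) :
  Order.max (x : T^d) y = Order.min x y.
Proof. by rewrite -joinEtotal joinEdual meetEtotal. Qed.

Lemma min_dual {disp : Order.disp_t} {T : orderType disp} (x y : T) :
  Order.min (x : T^d) y = Order.max x y.
Proof. by rewrite -meetEtotal meetEdual joinEtotal. Qed.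

Lemma lperm_dual {disp : Order.disp_t} {T : orderType disp}
  (G : (T -> T) -> Prop) : l_perm_group G -> @l_perm_group _ T^d G.
Proof.
case=> aut Gid Gmul Ginv Glat; split=> // [f /aut [bij_f mono_f]|f g Gf Gg].
  by split=> // x y; rewrite !leEdual mono_f.
have -> : (fun x => Order.max (f x : T^d) (g x)) =
          (fun x => Order.min (f x : T) (g x)).
  by apply: functional_extensionality => x; exact: max_dual.
have -> : (fun x => Order.min (f x : T^d) (g x)) =
          (fun x => Order.max (f x : T) (g x)).
  by apply: functional_extensionality => x; exact: min_dual.
by have [Gmax Gmin] := Glat f g Gf Gg.
Qed.

Lemma o2_transitive_dual {disp : Order.disp_t} {T : orderType disp}
  (G : (T -> T) -> Prop) : o2_transitive G -> @o2_transitive _ T^d G.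
Proof.
move=> o2 a b c e; rewrite !ltEdual => ba ec.
by have [g [Gg [gb ga]]] := o2 b a e c ba ec; exists g.
Qed.

Theorem lemma3p1 (disp : Order.disp_t) (T : orderType disp)
  (G : (T -> T) -> Prop)
  (HG : l_perm_group G) (H2 : o2_transitive G)
  (g h : T -> T) (Gg : G g) (Gh : G h)
  (hne1 : h <> id)
  (hdisj : forall x : T, psupp h x -> ~ psupp (pconj h g) x) :
  exists f k : T -> T, G f /\ G k /\
    pmul (pcomm (oinv h) (pconj h f))
         (pcomm (oinv (pconj h g)) (pconj h (pmul g k)))
    <>
    pmul (pcomm (oinv (pconj h g)) (pconj h (pmul g k)))
         (pcomm (oinv h) (pconj h f)).
Proof.
have disj : disjoint_supp h (pconj h g).
  move=> x; case: (eqVneq (h x) x) => [|/eqP hx]; [by left | right].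
  by apply: NNPP; apply: hdisj.
have [a ha] : exists a, h a <> a.
  apply: not_all_ex_not => fix_h; apply: hne1.
  exact: functional_extensionality.
suff [f [k [Gf [Gk ne]]]] : comms_noncommuting G h (pconj h g).
  have [bg bk] := (lperm_bij HG Gg, lperm_bij HG Gk).
  by exists f, k; rewrite pconj_pmul.
case: (ltgtP a (h a)) => [aha|haa|/esym //].
- exact: (comms_noncommuting_conj_of_lt HG H2 Gg Gh disj aha).
- have aha : (a : T^d) < h a by rewrite ltEdual.
  exact: (comms_noncommuting_conj_of_lt (lperm_dual HG) (o2_transitive_dual H2)
            Gg Gh disj aha).
Qed.
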